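(* Let $\overrightarrow{W}$ be a Morse sequence on a simplicial complex $K$. Then for every $p$, $\widehat{\partial}_p\circ\curlywedge_p=\curlywedge_{p-1}\circ\partial_p$ as maps $K[p]\to\widehat W[p-1]$, and $\widehat{\delta}_p\circ\curlyvee_p=\curlyvee_{p+1}\circ\delta_p$ as maps $K[p]\to\widehat W[p+1]$.
   Context: A simplicial complex $K$ is a finite collection of non-empty finite sets closed under taking non-empty subsets; $\dim\sigma=|\sigma|-1$, $K^{(p)}$ the set of $p$-simplices. A pair $(\sigma,\tau)$ with $\sigma\subsetneq\tau$ is a free pair for $K$ if $\tau$ is the only simplex other than $\sigma$ containing $\sigma$; $K$ is then an elementary expansion of $K\setminus\{\sigma,\tau\}$. If $\nu$ is a facet (maximal simplex) of $K$, $K$ is an elementary filling of $K\setminus\{\nu\}$. A Morse sequence on $K$ is a sequence $\langle\emptyset=K_0,\dots,K_k=K\rangle$ with each $K_i$ an elementary expansion or filling of $K_{i-1}$; simplices added by fillings are critical; for an expansion $K_i=K_{i-1}\cup\{\sigma,\tau\}$, $\sigma\subset\tau$, $(\sigma,\tau)$ is a regular pair, $\sigma$ lower regular, $\tau$ upper regular. $\widehat W$ is the set of critical simplices. $K[p]$ is the $\mathbb{Z}_2$-vector space of subsets of $K^{(p)}$ (sum = symmetric difference, $0=\emptyset$; $K[p]=\{0\}$ if $p<0$ or $p>\dim K$), and $\widehat W[p]=\{c\in K[p]:c\subseteq\widehat W\}$. For $\sigma\in K^{(p)}$, $\partial(\sigma)=\{\tau\in K^{(p-1)}:\tau\subset\sigma\}$,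 $\delta(\sigma)=\{\tau\in K^{(p+1)}:\sigma\subset\tau\}$; $\partial_p:K[p]\to K[p-1]$ and $\delta_p:K[p]\to K[p+1]$ are their linear extensions. The reference map $\curlywedge$ is the unique map assigning to each $p$-simplex an element of $\widehat W[p]$, with linear extension $\curlywedge_p:K[p]\to\widehat W[p]$, such that $\curlywedge(\nu)=\{\nu\}$ for critical $\nu$ and $\curlywedge(\tau)=0=\curlywedge(\partial(\tau))$ for upper regular $\tau$; the coreference map $\curlyvee$ (linear extension $\curlyvee_p$) is the unique such map with $\curlyvee(\nu)=\{\nu\}$ for critical $\nu$ and $\curlyvee(\sigma)=0=\curlyvee(\delta(\sigma))$ for lower regular $\sigma$. The linear maps $\widehat\partial_p:\widehat W[p]\to\widehat W[p-1]$ and $\widehat\delta_p:\widehat W[p]\to\widehat W[p+1]$ are defined by $\widehat\partial_p(c)=\curlywedge_{p-1}(\partial_p(c))$ and $\widehat\delta_p(c)=\curlyvee_{p+1}(\delta_p(c))$. *)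

(* Simplices are finite sets of vertices of a finType V;
   a complex is a {set {set V}}; Z2-chains are {set {set V}} with
   symmetric difference as sum. *)
From mathcomp Require Import all_boot.
Set Implicit Arguments. Unset Strict Implicit. Unset Printing Implicit Defensive.

Section Defs.
Variable V : finType.
Notation simplex := {set V}.
Notation cplx := {set {set V}}.

Definition is_complex (K : cplx) : Prop :=
  set0 \notin K /\
  forall s t : simplex, s \in K -> t != set0 -> t \subset s -> t \in K.

Definition free_pair (K : cplx) (s t : simplex) : Prop :=
  s \proper t /\ s \in K /\ t \in K /\
  forall u, u \in K -> s \subset u -> u = s \/ u = t.

Definition facet (K : cplx) (nu : simplex) : Prop :=
  nu \in K /\ forall u, u \in K -> nu \subset u -> u = nu.

Definition elem_expansion (K' K : cplx) (s t : simplex) : Prop :=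
  is_complex K /\ free_pair K s t /\ K' = K :\: [set s; t].

Definition elem_filling (K' K : cplx) (nu : simplex) : Prop :=
  is_complex K /\ facet K nu /\ K' = K :\ nu.

(* A step of a Morse sequence: a filling adding a critical simplex, or an
   expansion adding a regular pair (sigma, tau). *)
Inductive mstep : Type :=
| Fill of simplex
| Expand of simplex & simplex.

Definition added (w : mstep) : cplx :=
  match w with Fill nu => [set nu] | Expand s t => [set s; t] end.

Definition cplx_of (W : seq mstep) : cplx := \bigcup_(w <- W) added w.

(* W encodes a Morse sequence <K_0 = empty, ..., K_k = K> with
   K_i = cplx_of (take i W). *)
Definition morse_seq (K : cplx) (W : seq mstep) : Prop :=
  cplx_of W = K /\
  forall i, i < size W ->
    match nth (Fill set0) W i with
    | Fill nu => elem_filling (cplx_of (take i W)) (cplx_of (take i.+1 W)) nu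
    | Expand s t => elem_expansion (cplx_of (take i W)) (cplx_of (take i.+1 W)) s t
    end.

Definition crit_of (w : mstep) : cplx :=
  match w with Fill nu => [set nu] | Expand _ _ => set0 end.
Definition lowreg_of (w : mstep) : cplx :=
  match w with Fill _ => set0 | Expand s _ => [set s] end.
Definition upreg_of (w : mstep) : cplx :=
  match w with Fill _ => set0 | Expand _ t => [set t] end.

Definition crit (W : seq mstep) : cplx := \bigcup_(w <- W) crit_of w.
Definition lowreg (W : seq mstep) : cplx := \bigcup_(w <- W) lowreg_of w.
Definition upreg (W : seq mstep) : cplx := \bigcup_(w <- W) upreg_of w.

(* boundary / coboundary of a simplex (faces of dimension one less / more);
   dim s = #|s| - 1 *)
Definition bd (K : cplx) (s : simplex) : cplx :=
  [set t in K | (t \subset s) && (#|t| == #|s|.-1)].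
Definition cobd (K : cplx) (s : simplex) : cplx :=
  [set t in K | (s \subset t) && (#|t| == #|s|.+1)].

(* Z2-linear extension of a map from simplices to chains:
   lin f c = sum (symmetric difference) of f s over s in c *)
Definition lin (f : simplex -> cplx) (c : cplx) : cplx :=
  [set x | odd #|[set s in c | x \in f s]|].

Definition chain (K : cplx) (p : nat) (c : cplx) : Prop :=
  c \subset [set s in K | #|s| == p.+1].

Definition is_reference (K : cplx) (W : seq mstep) (r : simplex -> cplx) : Prop :=
  (forall s, s \in K -> r s \subset [set n in crit W | #|n| == #|s|]) /\
  (forall nu, nu \in crit W -> r nu = [set nu]) /\
  (forall t, t \in upreg W -> r t = set0 /\ lin r (bd K t) = set0).

Definition is_coreference (K : cplx) (W : seq mstep) (c : simplex -> cplx) : Prop :=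
  (forall s, s \in K -> c s \subset [set n in crit W | #|n| == #|s|]) /\
  (forall nu, nu \in crit W -> c nu = [set nu]) /\
  (forall s, s \in lowreg W -> c s = set0 /\ lin c (cobd K s) = set0).

End Defs.

From mathcomp Require Import all_boot zify.
Set Implicit Arguments. Unset Strict Implicit. Unset Printing Implicit Defensive.

(* It suffices to prove [∂̂(⋏ s) = ⋏(∂ s)] for every simplex [s], by induction
   on the step of the Morse sequence adding [s]. If [s] is critical, [⋏ s = {s}];
   if [s] is upper regular, both sides vanish. If [s] is lower regular, paired
   with [t], then [⋏(∂ t) = 0] gives [⋏ s = ⋏(∂ t - s)], a chain of faces added
   before [s], so by induction [∂̂(⋏ s) = ⋏(∂(∂ t - s)) = ⋏(∂ s)] since [∂ ∂ = 0].
   The coreference map is handled dually, inducting backwards along the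
   sequence: the other cofaces of a lower regular [s] are added after its pair. *)

Section Z2Chains.
Variable V : finType.
Implicit Types (f g : {set V} -> {set {set V}}) (c : {set {set V}}).

Lemma odd_card_setE (T : finType) (A : {set T}) (P : pred T) :
  odd #|[set s in A | P s]| = \big[addb/false]_(s in A) P s.
Proof.
rewrite -sum1_card (big_morph odd oddD (erefl : odd 0 = false)) big_mkcond.
by rewrite [RHS]big_mkcond; apply: eq_bigr => s _; rewrite !inE; case: (s \in A); case: (P s).
Qed.

Lemma linE f c x : (x \in lin f c) = \big[addb/false]_(s in c) (x \in f s).
Proof. by rewrite inE odd_card_setE. Qed.

Lemma eq_lin f g c : {in c, f =1 g} -> lin f c = lin g c.
Proof. by move=> fg; apply/setP => x; rewrite !linE; apply: eq_bigr => s /fg ->. Qed.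

Lemma lin_set0 f : lin f set0 = set0.
Proof. by apply/setP => x; rewrite linE big_set0 inE. Qed.

Lemma lin_set1 f s : lin f [set s] = f s.
Proof. by apply/setP => x; rewrite linE big_set1. Qed.

Lemma lin_comp f g c : lin g (lin f c) = lin (fun s => lin g (f s)) c.
Proof.
apply/setP => x; rewrite !linE big_mkcond /=.
under eq_bigr => u _ do rewrite -[if _ then _ else _]/(_ && _) linE big_distrl.
rewrite exchange_big; apply: eq_bigr => s _.
by rewrite linE [RHS]big_mkcond.
Qed.

Lemma lin_eq0_setD1 f c s : s \in c -> lin f c = set0 -> lin f (c :\ s) = f s.
Proof.
move=> cs /setP f0; apply/setP => x; move: (f0 x).
rewrite !linE (big_setD1 _ cs) in_set0 /=.
by case: (x \in f s); case: (\big[_/_]_(_ in _) _).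
Qed.

End Z2Chains.

Section ReferenceCommutation.
Variables (V : finType) (K : {set {set V}}) (D f : {set V} -> {set {set V}}).
Variable m : {set V} -> nat.

(* The three cases: critical, upper regular, and lower regular paired with [t],
   whose other faces have smaller measure [m]. *)
Definition ref_case (s : {set V}) : Prop :=
  [\/ f s = [set s], f s = set0 /\ lin f (D s) = set0 |
   exists2 t, [/\ t \in K, s \in D t & lin f (D t) = set0] &
     forall u, u \in D t -> u != s -> u \in K /\ m u < m s].

Hypothesis DD0 : {in K, forall s, lin D (D s) = set0}.
Hypothesis f_case : {in K, forall s, ref_case s}.

Lemma lin_refD_ref s : s \in K -> lin (fun u => lin f (D u)) (f s) = lin f (D s).
Proof.
set h := fun u => lin f (D u).
elim: {s}(m s).+1 {-2}s (ltnSn (m s)) => // n IHn s ltsn sK.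
have [->|[-> ->]|[t [tK sDt fDt0] Dt_lt]] := f_case sK.
- by rewrite lin_set1.
- by rewrite lin_set0.
have hDt0 : lin h (D t) = set0 by rewrite /h -lin_comp DD0 // lin_set0.
rewrite -(lin_eq0_setD1 sDt fDt0) lin_comp -[lin f (D s)]/(h s).
rewrite -(lin_eq0_setD1 sDt hDt0).
apply: eq_lin => u; rewrite !inE => /andP[us uDt].
have [uK ltus] := Dt_lt u uDt us.
by apply: IHn => //; apply: leq_trans ltus _.
Qed.

End ReferenceCommutation.

Section ComplexBoundary.
Variables (V : finType) (K : {set {set V}}).
Hypothesis KC : is_complex K.

Lemma card_middle_faces (lo hi : {set V}) :
  hi \in K -> lo \subset hi -> #|hi| = #|lo| + 2 ->
  #|[set u in K | [&& lo \subset u, u \subset hi & #|u| == #|lo|.+1]]| = 2.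
Proof.
move=> hiK lohi card_hi.
have card_diff : #|hi :\: lo| = 2 by rewrite cardsD (setIidPr lohi); lia.
suff -> : [set u in K | [&& lo \subset u, u \subset hi & #|u| == #|lo|.+1]] =
          [set a |: lo | a in hi :\: lo].
  rewrite card_in_imset // => a b; rewrite !inE => /andP[alo _] _ ab.
  have : a \in b |: lo by rewrite -ab setU11.
  by case/setU1P => // a_lo; rewrite a_lo in alo.
apply/setP => u; rewrite !inE; apply/idP/imsetP.
- case/and4P => uK lou uhi /eqP card_u.
  have /cards1P[a ua] : #|u :\: lo| == 1.
    by rewrite cardsD (setIidPr lou) card_u; apply/eqP; lia.
  have : a \in u :\: lo by rewrite ua set11.
  rewrite inE => /andP[alo au].
  exists a; first by rewrite inE alo (subsetP uhi).
  apply/setP => y; rewrite in_setU1; apply/idP/idP => [yu|/orP[/eqP->|/(subsetP lou)]] //.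
  rewrite orbC; case ylo: (y \in lo) => //=.
  have : y \in u :\: lo by rewrite inE ylo yu.
  by rewrite ua inE.
- case=> a; rewrite inE => /andP[alo ahi] ->.
  have ahi_sub : a |: lo \subset hi by rewrite subUset sub1set ahi lohi.
  rewrite (proj2 KC hi) //; last by apply/set0Pn; exists a; rewrite setU11.
  by rewrite subsetUr ahi_sub cardsU1 alo eqxx.
Qed.

Lemma lin_bd_bd s : s \in K -> lin (bd K) (bd K s) = set0.
Proof.
move=> sK; apply/setP => x; rewrite in_set0 inE.
set A := [set _ in _ | _].
have [->|[u0]] := set_0Vmem A; first by rewrite cards0.
rewrite !inE => /andP[/and3P[_ u0s /eqP card_u0] /and3P[xK xu0 /eqP card_x]].
have x_gt0 : 0 < #|x|.
  by rewrite card_gt0; apply: contraNneq (proj1 KC) => <-.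
suff -> : A = [set u in K | [&& x \subset u, u \subset s & #|u| == #|x|.+1]].
  by rewrite card_middle_faces // ?(subset_trans xu0 u0s) //; lia.
apply/setP => u; rewrite !inE; apply/idP/idP.
- by case/andP => /and3P[-> -> /eqP ?] /and3P[_ -> /eqP ?]; apply/eqP; lia.
- by case/and4P => -> -> -> /eqP ?; rewrite xK; apply/andP; split; apply/eqP; lia.
Qed.

Lemma lin_cobd_cobd s : s \in K -> lin (cobd K) (cobd K s) = set0.
Proof.
move=> sK; apply/setP => x; rewrite in_set0 inE.
set A := [set _ in _ | _].
have [->|[u0]] := set_0Vmem A; first by rewrite cards0.
rewrite !inE => /andP[/and3P[_ su0 /eqP card_u0] /and3P[xK u0x /eqP card_x]].
suff -> : A = [set u in K | [&& s \subset u, u \subset x & #|u| == #|s|.+1]].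
  by rewrite card_middle_faces // ?(subset_trans su0 u0x) //; lia.
apply/setP => u; rewrite !inE; apply/idP/idP.
- by case/andP => /and3P[-> -> /eqP ?] /and3P[_ -> /eqP ?]; apply/eqP; lia.
- by case/and4P => -> -> -> /eqP ?; rewrite xK; apply/andP; split; apply/eqP; lia.
Qed.

End ComplexBoundary.

Lemma elem_expansion_card (V : finType) (K' K : {set {set V}}) (s t : {set V}) :
  elem_expansion K' K s t -> s \subset t /\ #|t| = #|s|.+1.
Proof.
case=> [[_ closed] [[/properP[st [x xt xs]] [_ [tK free]]] _]].
have xs_sub : x |: s \subset t by rewrite subUset sub1set xt st.
have /free[] : x |: s \in K.
  by apply: (closed _ _ tK _ xs_sub); apply/set0Pn; exists x; rewrite setU11.
- by rewrite subsetUr.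
- by move=> xsE; rewrite -xsE setU11 in xs.
- by move=> <-; rewrite subsetUr cardsU1 xs.
Qed.

Lemma mem_bigcup_seq (T : Type) (U : finType) (F : T -> {set U}) (r : seq T) x :
  (x \in \bigcup_(i <- r) F i) = has (fun i => x \in F i) r.
Proof.
elim: r => [|i r IHr]; first by rewrite big_nil inE.
by rewrite big_cons in_setU IHr.
Qed.

Section MorseSequence.
Variables (V : finType) (K : {set {set V}}) (W : seq (mstep V)).
Hypothesis MS : morse_seq K W.

Definition step_of (s : {set V}) : nat := find (fun w => s \in added w) W.

Lemma mem_nth_bigcup (F : mstep V -> {set {set V}}) i x :
  i < size W -> x \in F (nth (Fill set0) W i) -> x \in \bigcup_(w <- W) F w.
Proof.
by move=> ltiW Fx; rewrite mem_bigcup_seq; apply/(has_nthP (Fill set0)); exists i.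
Qed.

Lemma step_of_lt s : s \in K -> step_of s < size W.
Proof. by rewrite -(proj1 MS) mem_bigcup_seq has_find. Qed.

Lemma mem_added_step_of s : s \in K -> s \in added (nth (Fill set0) W (step_of s)).
Proof. by rewrite -(proj1 MS) mem_bigcup_seq => /(nth_find (Fill set0)). Qed.

Lemma mem_cplx_of_take i s : s \in K -> (s \in cplx_of (take i W)) = (step_of s < i).
Proof. by rewrite -{1}(proj1 MS) !mem_bigcup_seq => /has_take ->. Qed.

Lemma cplx_of_take_sub i : cplx_of (take i W) \subset K.
Proof.
apply/subsetP => s; rewrite -(proj1 MS) !mem_bigcup_seq.
by rewrite -[in X in _ -> X](cat_take_drop i W) has_cat => ->.
Qed.

Lemma is_complex_take i : i < size W -> is_complex (cplx_of (take i.+1 W)).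
Proof. by move/(proj2 MS); case: nth => [nu [] | s t []]. Qed.

Lemma morse_seq_complex : is_complex K.
Proof.
split=> [|s t sK t0 ts].
  apply/negP => s0K; have [+ _] := is_complex_take (step_of_lt s0K).
  by rewrite mem_cplx_of_take ?ltnSn.
have [_ closed] := is_complex_take (step_of_lt sK).
apply: (subsetP (cplx_of_take_sub (step_of s).+1)).
by apply: closed t0 ts; rewrite mem_cplx_of_take.
Qed.

Lemma reference_case refm : is_reference K W refm ->
  {in K, forall s, ref_case K (bd K) refm step_of s}.
Proof.
move=> [_ [ref_crit ref_up]] s sK.
move: (step_of_lt sK) (mem_added_step_of sK) (proj2 MS _ (step_of_lt sK)).
case Ei: nth => [nu|a b] ltiW s_added step.
  apply: Or31; apply: ref_crit; rewrite inE in s_added; rewrite (eqP s_added).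
  by apply: (mem_nth_bigcup ltiW); rewrite Ei inE.
have [ab card_b] := elem_expansion_card step.
have bU : b \in upreg W by apply: (mem_nth_bigcup ltiW); rewrite Ei inE.
have [sa|->] := set2P s_added; last exact/Or32/ref_up.
subst s; case: step => [[_ closed] [[_ [_ [bKi _]]] Ki]].
apply: Or33; exists b.
  split; last exact: (proj2 (ref_up b bU)).
  - exact: (subsetP (cplx_of_take_sub _) _ bKi).
  - by rewrite inE sK ab card_b eqxx.
move=> u; rewrite inE => /and3P[uK ub /eqP card_u] ua; split=> //.
rewrite -mem_cplx_of_take // Ki !inE (negbTE ua) /=.
have -> /= : (u == b) = false by apply/eqP => ub_eq; rewrite ub_eq in card_u; lia.
apply: (closed _ _ bKi _ ub); apply: contraTneq uK => ->; exact: (proj1 morse_seq_complex).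
Qed.

Lemma coreference_case corefm : is_coreference K W corefm ->
  {in K, forall s, ref_case K (cobd K) corefm (fun u => size W - step_of u) s}.
Proof.
move=> [_ [coref_crit coref_low]] s sK.
move: (step_of_lt sK) (mem_added_step_of sK) (proj2 MS _ (step_of_lt sK)).
case Ei: nth => [nu|a b] ltiW s_added step.
  apply: Or31; apply: coref_crit; rewrite inE in s_added; rewrite (eqP s_added).
  by apply: (mem_nth_bigcup ltiW); rewrite Ei inE.
have [ab card_b] := elem_expansion_card step.
have aL : a \in lowreg W by apply: (mem_nth_bigcup ltiW); rewrite Ei inE.
have [->|sb] := set2P s_added; first exact/Or32/coref_low.
subst s; case: step => [_ [[_ [aKi [_ free]]] _]].
apply: Or33; exists a.
  split; last exact: (proj2 (coref_low a aL)).
  - exact: (subsetP (cplx_of_take_sub _) _ aKi).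
  - by rewrite inE sK ab card_b eqxx.
move=> u; rewrite inE => /and3P[uK au /eqP card_u] ub; split=> //.
have ltuW := step_of_lt uK.
suff : step_of b < step_of u by lia.
rewrite ltnNge -ltnS -mem_cplx_of_take //; apply/negP => /free /(_ au) [ua|].
  by rewrite ua in card_u; lia.
by move/eqP; rewrite (negbTE ub).
Qed.

End MorseSequence.

Theorem theorem4 (V : finType) (K : {set {set V}}) (W : seq (mstep V))
    (refm corefm : {set V} -> {set {set V}}) :
  morse_seq K W -> is_reference K W refm -> is_coreference K W corefm ->
  forall (p : nat) (c : {set {set V}}), chain K p c ->
    lin refm (lin (bd K) (lin refm c)) = lin refm (lin (bd K) c) /\
    lin corefm (lin (cobd K) (lin corefm c)) = lin corefm (lin (cobd K) c).
Proof.
move=> MS ref coref p c /subsetP c_sub.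
have KC := morse_seq_complex MS.
have cK s : s \in c -> s \in K by move/c_sub; rewrite inE => /andP[].
split; rewrite !lin_comp; apply: eq_lin => s /cK sK.
- exact: lin_refD_ref (lin_bd_bd KC) (reference_case MS ref) _ sK.
- exact: lin_refD_ref (lin_cobd_cobd KC) (coreference_case MS coref) _ sK.
Qed.
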